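(* Let $G$ and $H$ be finite groups and let $\pi$ be a set of primes. Suppose that $G$ has a hypercentral Hall $\pi$-subgroup. Suppose further that for every positive integer $n$, the number of conjugacy classes of $\pi$-elements of $G$ of size $n$ equals the number of conjugacy classes of $\pi$-elements of $H$ of size $n$. Then $H$ has a hypercentral Hall $\pi$-subgroup.
   Context: A $\pi$-element of a group is an element whose order is divisible only by primes in $\pi$. The hypercentre $\mathbf{Z}_\infty(G)$ of $G$ is the last term of the upper central series $1\le \mathbf{Z}_1(G)\le \mathbf{Z}_2(G)\le\cdots$, where $\mathbf{Z}_1(G)=\mathbf{Z}(G)$ and $\mathbf{Z}_{i+1}(G)/\mathbf{Z}_i(G)=\mathbf{Z}(G/\mathbf{Z}_i(G))$. A subgroup is hypercentral in $G$ if it is contained in $\mathbf{Z}_\infty(G)$. The size of the conjugacy class of $g$ is $|G:C_G(g)|$. *)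

From mathcomp Require Import all_boot all_fingroup all_solvable.
Set Implicit Arguments. Unset Strict Implicit. Unset Printing Implicit Defensive.
Local Open Scope group_scope.

(* The hypercentre Z_oo(G): last term of the upper central series. For a finite
   group the series stabilises, so A is hypercentral iff A \subset 'Z_n(G)
   for some n. *)
Definition hypercentral (gT : finGroupType) (G A : {set gT}) : Prop :=
  exists n : nat, A \subset 'Z_n(G).

Definition num_pi_classes (gT : finGroupType) (pi : nat_pred) (G : {set gT})
    (n : nat) : nat :=
  #|[set C in classes G | pi.-elt (repr C) && (#|C| == n)]|.

From mathcomp Require Import all_boot all_fingroup all_solvable.
Set Implicit Arguments. Unset Strict Implicit. Unset Printing Implicit Defensive.
Local Open Scope group_scope.

(* For p in pi let W_pi(X) be the set of pi-elements of X whose class size is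
   a power of p.  Its order is determined by the numbers of classes of
   pi-elements of each size, so |W_pi(G)| = |W_pi(H)|, and its p-part does not
   depend on pi: factoring out a central subgroup of order p divides |W_pi(X)|
   by p, and when p does not divide |Z(X)| a Sylow p-subgroup acting on
   W_pi(X) by conjugation fixes exactly the central pi-elements, whose number
   divides |Z(X)|.  For pi = {p} the set lies in O_p(X).  In G the p-elements
   of the hypercentre commute with all p'-elements, so |W_p(G)| = |G|_p, and
   hence |O_p(H)| >= |G|_p for every p in pi.  As G and H have equally many
   pi-elements, namely |G|_pi, the pi-elements of H form the Hall subgroup
   O_pi(H), and each O_p(H) is a Sylow subgroup all of whose elements have
   p-power class size.  Conjugation by H on O_p(H) is then realised inside
   O_p(H), which puts O_p(H), and so O_pi(H), into the hypercentre of H. *)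

Lemma nat_pred1_sub (p : nat) (pi : nat_pred) : p \in pi -> {subset (p : nat_pred) <= pi}.
Proof. by move=> pi_p r; rewrite inE => /eqP->. Qed.

Lemma partn_dvd_of_p_parts (rho : nat_pred) (n m : nat) :
  (forall p, prime p -> p \in rho -> n`_p %| m)%N -> (n`_rho %| m)%N.
Proof.
move=> dv_p; apply/dvdn_partP => [|p pi_p]; first exact: part_gt0.
have p_pr : prime p by move: pi_p; rewrite mem_primes => /andP[].
have rho_p : p \in rho := pnatPpi (part_pnat rho n) pi_p.
by rewrite (partn_part _ (nat_pred1_sub rho_p)); apply: dv_p.
Qed.

Lemma dvdn_of_leq_pnat (p m n : nat) :
  prime p -> p.-nat m -> p.-nat n -> m <= n -> (m %| n)%N.
Proof.
move=> p_pr p_m p_n; rewrite -(part_pnat_id p_m) -(part_pnat_id p_n) !p_part.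
by rewrite leq_exp2l ?prime_gt1 //; apply: dvdn_exp2l.
Qed.

Lemma card_morphpre_set (aT rT : finGroupType) (D : {group aT})
    (f : {morphism D >-> rT}) (R : {set rT}) :
  R \subset f @* D -> #|f @*^-1 R| = (#|'ker f| * #|R|)%N.
Proof.
move=> sRfD; rewrite -sum1_card (partition_big f (mem R)) => [|x /morphpreP[]//].
rewrite mulnC -sum_nat_const; apply: eq_bigr => y Ry.
have [x Dx _ def_y] := morphimP (subsetP sRfD y Ry); rewrite def_y.
rewrite sum1_card -(card_rcoset _ x) -morphpre_set1 //; apply: eq_card => z.
rewrite unfold_in /= !inE; case: (z \in D) => //=.
by case: eqP => [->|]; rewrite ?andbF ?andbT // -def_y.
Qed.

Section GroupFacts.

Variable gT : finGroupType.
Implicit Types (G H X A B C K P S : {group gT}) (pi : nat_pred) (p n k : nat) (x s : gT).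

Lemma commute_of_commg_pelt p x s :
  p.-elt [~ x, s] -> p^'.-elt s -> commute [~ x, s] s -> commute x s.
Proof.
move=> p_c p'_s cs; apply/commgP.
move: [~ x, s] (conjg_mulR x s) p_c cs => c xs p_c cs.
have xsj j : x ^ (s ^+ j) = x * c ^+ j.
  elim: j => [|j IHj]; first by rewrite !expg0 conjg1 mulg1.
  have csj : (c ^+ j) ^ s = c ^+ j by apply/conjg_fixP/commgP/commute_sym/commuteX.
  by rewrite expgSr conjgM IHj conjMg csj xs -mulgA -expgS.
have c_os : c ^+ #[s] = 1.
  by apply: (mulgI x); rewrite -xsj expg_order conjg1 mulg1.
have co_cs : coprime #[c] #[s] := pnat_coprime p_c p'_s.
by rewrite -order_eq1 -dvdn1 -(eqnP co_cs) dvdn_gcd dvdnn order_dvdn c_os eqxx.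
Qed.

Lemma pnat_index_p'elt p G C :
  C \subset G -> {in G, forall s, p^'.-elt s -> s \in C} -> p.-nat #|G : C|.
Proof.
move=> sCG p'C; apply/(pnatP _ (indexg_gt0 G C)) => q q_pr q_dv.
apply: contraT => p'q; have {}p'q : q \in p^' by rewrite inE.
have [S sylS] := Sylow_exists q G.
have [sSG qS q'iS] := and3P sylS.
have sSC : S \subset C.
  apply/subsetP => s Ss; apply: p'C (subsetP sSG s Ss) _.
  exact: sub_p_elt (nat_pred1_sub p'q) (mem_p_elt qS Ss).
have : q \in q^'.
  apply: (pnatP _ (indexg_gt0 G S) q'iS) q_pr _.
  by rewrite -(Lagrange_index sCG sSC) dvdn_mulr.
by rewrite !inE eqxx.
Qed.

Lemma card_pcore_leq p G : #|'O_p(G)| <= #|G|`_p.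
Proof.
have [S sylS] := Sylow_exists p G.
by rewrite -(card_Hall sylS) subset_leq_card ?pcore_sub_Hall.
Qed.

Lemma class_sub_Sylow_class p G S x :
  p.-Sylow(G) S -> x \in G -> p.-nat #|x ^: G| -> x ^: G \subset x ^: S.
Proof.
move=> sylS Gx p_xG; have [sSG _ p'iS] := and3P sylS.
have defG : 'C_G[x] * S = G.
  apply: coprime_index_mulG (subcent1_sub x G) sSG _.
  by rewrite index_cent1 (pnat_coprime p_xG).
apply/subsetP => _ /imsetP[g + ->]; rewrite -defG => /mulsgP[c t /setIP[_ cxc] St ->].
have xc : x ^ c = x by apply/conjg_fixP/commgP/commute_sym/cent1P.
by rewrite conjgM xc memJ_class.
Qed.

Lemma ucn_sub_of_class_sub A H k :
  A \subset H -> {in A, forall a, a ^: H \subset a ^: A} -> 'Z_k(A) \subset 'Z_k(H).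
Proof.
move=> sAH clA; elim: k => [|k IHk]; first by rewrite !ucn0.
apply/subsetP => x; rewrite !ucnSnR !inE => /andP[Ax sxA].
rewrite (subsetP sAH x Ax) gen_subG /=; apply/subsetP => _ /imset2P[_ h /set1P-> Hh ->].
have /imsetP[t At xht] := subsetP (clA x Ax) _ (memJ_class x Hh).
by rewrite commgEl xht -commgEl (subsetP IHk) // (subsetP sxA) // mem_commg ?set11.
Qed.

Lemma Sylow_sub_ucn_of_pclass p H S :
  p.-Sylow(H) S -> {in S, forall a, p.-nat #|a ^: H|} -> S \subset 'Z_#|H|(H).
Proof.
move=> sylS pS; have sSH := pHall_sub sylS; have nilS := pgroup_nil (pHall_pgroup sylS).
have defS : 'Z_#|H|(S) = S.
  apply/ucn_nil_classP => //; apply: leq_trans (subset_leq_card sSH).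
  by rewrite ltnW // -nilpotent_class.
rewrite -{1}defS; apply: ucn_sub_of_class_sub => // a Sa.
exact: class_sub_Sylow_class sylS (subsetP sSH a Sa) (pS a Sa).
Qed.

Lemma p_elt_coset pi K x :
  pi.-group K -> x \in 'N(K) -> pi.-elt (coset K x) = pi.-elt x.
Proof.
move=> piK Nx; have sxN : <[x]> \subset 'N(K) by rewrite cycle_subG.
by have := pquotient_pgroup piK sxN; rewrite quotient_cycle.
Qed.

Lemma pnat_class_quotient p X K x :
  K \subset 'Z(X) -> p.-group K -> x \in X ->
  p.-nat #|x ^: X| = p.-nat #|coset K x ^: (X / K)|.
Proof.
move=> sKZ pK Xx; have nsKX := sub_center_normal sKZ.
have nKX := normal_norm nsKX; have Nx := subsetP nKX x Xx.
(* |x ^: X| = |X / K : C(xK)| * |D : C_X(x)|, and the second factor is a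
   p-number: the commutator of x with a p'-element of D is a central
   p-element, hence trivial. *)
set D := coset K @*^-1 'C_(X / K)[coset K x].
have sDX : D \subset X.
  by rewrite -[in X in _ \subset X](quotientGK nsKX) morphpreS ?subsetIl.
have sCD : 'C_X[x] \subset D.
  by rewrite -sub_quotient_pre ?quotient_subcent1 // subIset ?nKX.
have -> : #|x ^: X| = (#|X : D| * #|D : 'C_X[x]|)%N.
  by rewrite -index_cent1 Lagrange_index.
have -> : #|X : D| = #|X / K : 'C_(X / K)[coset K x]|.
  by rewrite -index_cosetpre quotientGK.
rewrite -index_cent1 pnatM; suff -> : p.-nat #|D : 'C_X[x]| by rewrite andbT.
apply: pnat_index_p'elt sCD _ => s Ds p'_s.
have /morphpreP[Ns /setIP[_ /cent1P cxs]] := Ds.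
have Xs := subsetP sDX s Ds.
have K_xs : [~ x, s] \in K.
  by apply: coset_idr; rewrite ?groupR // morphR //; apply/eqP/commgP/commute_sym.
have [_ /(_ s Xs) c_xs_s] := centerP _ _ (subsetP sKZ _ K_xs).
rewrite inE Xs; apply/cent1P/commute_sym.
exact: commute_of_commg_pelt (mem_p_elt pK K_xs) p'_s c_xs_s.
Qed.

Lemma hypercentral_Hall_normal pi n G P :
  pi.-Hall(G) P -> P \subset 'Z_n(G) -> P <| G.
Proof.
move=> hallP sPZ; have hallPZ := pHall_subl sPZ (ucn_sub n G) hallP.
rewrite (eq_Hall_pcore (nilpotent_pcore_Hall pi (ucn_nilpotent n G)) hallPZ).
exact: char_normal_trans (pcore_char pi _) (ucn_normal n G).
Qed.

Lemma hypercentral_pgroup_cent_p'elt p n G B :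
    B <| G -> p.-group B -> B \subset 'Z_n(G) ->
  {in G, forall g, p^'.-elt g -> g \in 'C(B)}.
Proof.
move=> nsBG pB sBZ g Gg p'g; apply/centP => b Bb; apply: commute_sym.
suff cBk k : b \in B :&: 'Z_k(G) -> commute b g.
  by apply: (cBk n); rewrite inE Bb (subsetP sBZ b Bb).
elim: k b {Bb} => [|k IHk] b.
  by rewrite ucn0 => /setIP[_ /set1P->]; apply: commute_sym (commute1 g).
case/setIP=> Bb Zb; have Gb := subsetP (ucn_sub k.+1 G) b Zb.
have B_bg : [~ b, g] \in B.
  by rewrite commgEl groupM ?groupV // memJ_norm // (subsetP (normal_norm nsBG)).
have Z_bg : [~ b, g] \in 'Z_k(G) by rewrite (subsetP (ucn_comm k G)) ?mem_commg.
by apply: commute_of_commg_pelt (mem_p_elt pB B_bg) p'g (IHk _ _); rewrite inE B_bg.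
Qed.

End GroupFacts.

Definition class_pi_elts (gT : finGroupType) (pi : nat_pred) (Qn : pred nat)
    (X : {set gT}) : {set gT} :=
  [set x in X | pi.-elt x && Qn #|x ^: X|].

Notation pclass_pi_elts pi p X := (class_pi_elts pi (pnat p) X).

Section PiElementsByClassSize.

Variable gT : finGroupType.
Implicit Types (G H X K P : {group gT}) (pi : nat_pred) (p n : nat) (x g : gT) (Qn : pred nat).

Lemma class_pi_eltsJ pi Qn X x g :
  g \in X -> (x ^ g \in class_pi_elts pi Qn X) = (x \in class_pi_elts pi Qn X).
Proof. by move=> Xg; rewrite !inE groupJr // p_eltJ classGidl. Qed.

Lemma pclass_pi_elts_gt0 pi p X : 0 < #|pclass_pi_elts pi p X|.
Proof. by apply/card_gt0P; exists 1; rewrite inE group1 p_elt1 class1G cards1. Qed.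

Lemma pclass_p_elts_sub_pcore p X : pclass_pi_elts p p X \subset 'O_p(X).
Proof.
apply/subsetP => u /setIdP[Xu /andP[p_u p_uX]].
have sUX : <[u]> \subset X by rewrite cycle_subG.
have [T sylT sUT] := Sylow_superset sUX p_u.
have sUX_T : u ^: X \subset T.
  apply: subset_trans (class_sub_Sylow_class sylT Xu p_uX) (class_subG _ _) => //.
  by rewrite -cycle_subG.
have nsUX : <<u ^: X>> <| X.
  by rewrite /normal gen_subG class_subG //= norms_gen ?class_norm.
have pUX : p.-group <<u ^: X>> by rewrite (pgroupS _ (pHall_pgroup sylT)) ?gen_subG.
by rewrite (subsetP (pcore_max pUX nsUX)) ?mem_gen ?class_refl.
Qed.

Lemma card_pclass_pi_elts_quotient pi p X K :
    p \in pi -> K \subset 'Z(X) -> p.-group K ->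
  #|pclass_pi_elts pi p X| = (#|K| * #|pclass_pi_elts pi p (X / K)|)%N.
Proof.
move=> pi_p sKZ pK; have nsKX := sub_center_normal sKZ.
have nKX := normal_norm nsKX.
have piK : pi.-group K := sub_pgroup (nat_pred1_sub pi_p) pK.
suff -> : pclass_pi_elts pi p X = coset K @*^-1 pclass_pi_elts pi p (X / K).
  by rewrite card_morphpre_set ?ker_coset ?sub_im_coset.
apply/setP => x; apply/idP/morphpreP.
  case/setIdP=> Xx /andP[pi_x p_xX]; have Nx := subsetP nKX x Xx.
  split=> //; rewrite inE mem_quotient //= p_elt_coset // pi_x.
  by rewrite -(pnat_class_quotient sKZ pK Xx).
case=> Nx /setIdP[XKx /andP[pi_x p_xX]].
have Xx : x \in X by rewrite -(quotientGK nsKX); apply/morphpreP.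
by rewrite inE Xx -(p_elt_coset piK Nx) pi_x (pnat_class_quotient sKZ pK Xx).
Qed.

Lemma pclass_pi_elts_ndvd pi p X :
  prime p -> ~~ (p %| #|'Z(X)|) -> ~~ (p %| #|pclass_pi_elts pi p X|).
Proof.
move=> p_pr p'Z; set W := pclass_pi_elts pi p X.
have [T sylT] := Sylow_exists p X; have [sTX pT p'iT] := and3P sylT.
have nWT : [acts T, on W | 'J].
  rewrite astabsJ; apply/subsetP => t Tt; rewrite inE; apply/subsetP => y.
  by rewrite mem_conjg class_pi_eltsJ // groupV (subsetP sTX).
have fixW : 'Fix_(W | 'J)(T) = 'O_pi('Z(X)).
  have hallZ := nilpotent_pcore_Hall pi (abelian_nil (center_abelian X)).
  rewrite afixJ; apply/setP => x; rewrite inE.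
  apply/andP/idP => [[/setIdP[Xx /andP[pi_x p_xX]] cTx] | Ox].
    have sTC : T \subset 'C_X[x] by rewrite subsetI sTX sub_cent1.
    have p'_xX : p^'.-nat #|x ^: X|.
      rewrite -index_cent1 (pnat_dvd _ p'iT) //.
      by rewrite -(Lagrange_index (subcent1_sub x X) sTC) dvdn_mulr.
    have : #|X : 'C_X[x]| == 1%N by rewrite index_cent1 (pnat_1 p_xX p'_xX).
    rewrite indexg_eq1 subsetI subxx sub_cent1 => cXx.
    have Zx : x \in 'Z(X) by rewrite inE Xx.
    by rewrite (mem_normal_Hall hallZ (pcore_normal _ _) Zx).
  have /setIP[Xx cXx] := subsetP (pcore_sub _ _) x Ox.
  have sXC : X \subset 'C[x] by rewrite sub_cent1.
  rewrite inE Xx (mem_p_elt (pcore_pgroup _ _) Ox) -index_cent1.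
  by rewrite (setIidPl sXC) indexgg (subsetP (centS sTX)).
have := pgroup_fix_mod pT nWT; rewrite fixW => modW.
apply: contra p'Z => p_W.
by rewrite (dvdn_trans _ (cardSg (pcore_sub pi _))) // /dvdn -modW.
Qed.

Lemma class_pi_elts_cover pi Qn X :
  class_pi_elts pi Qn X = cover [set C in classes X | pi.-elt (repr C) && Qn #|C|].
Proof.
apply/setP => x; apply/idP/bigcupP.
  case/setIdP=> Xx /andP[pi_x Qx]; exists (x ^: X); last exact: class_refl.
  by rewrite inE mem_classes //=; have [g _ ->] := repr_class X x; rewrite p_eltJ pi_x.
case=> _ /setIdP[/imsetP[y Xy ->] /andP[pi_r Q_C]] /imsetP[g Xg ->].
have [h _ def_r] := repr_class X y.
by rewrite class_pi_eltsJ // inE Xy Q_C -(p_eltJ _ _ h) -def_r pi_r.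
Qed.

Lemma card_class_pi_elts_size pi n X :
  #|class_pi_elts pi (pred1 n) X| = (n * num_pi_classes pi X n)%N.
Proof.
rewrite class_pi_elts_cover /num_pi_classes.
set P := [set C in classes X | _].
have tiP : trivIset P.
  have [_ tiX _] := and3P (classes_partition X).
  by apply: trivIsetS tiX; apply/subsetP => C /setIdP[].
rewrite -(eqnP tiP) mulnC -sum_nat_const.
by apply: eq_bigr => C /setIdP[_ /andP[_ /eqP]].
Qed.

Lemma card_class_pi_elts_sum pi Qn X b :
    #|X| <= b ->
  #|class_pi_elts pi Qn X|
    = (\sum_(n < b.+1 | Qn n) #|class_pi_elts pi (pred1 (n : nat)) X|)%N.
Proof.
move=> leXb; have ltxb x : x \in X -> #|x ^: X| < b.+1.
  by move=> Xx; rewrite ltnS (leq_trans _ leXb) ?subset_leq_card ?class_subG.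
rewrite -sum1_card (partition_big (fun x => inord #|x ^: X| : 'I_b.+1) Qn) => [|x].
  apply: eq_bigr => n Qn_n; rewrite sum1_card; apply: eq_card => x.
  rewrite unfold_in /= !inE; case Xx: (x \in X) => //=.
  rewrite -val_eqE /= inordK ?ltxb //.
  by case: eqP => [->|]; rewrite ?Qn_n ?andbT ?andbF.
by case/setIdP=> Xx /andP[_]; rewrite inordK ?ltxb.
Qed.

Lemma class_pi_elts_normal_Hall pi G P :
  pi.-Hall(G) P -> P <| G -> class_pi_elts pi predT G = P.
Proof.
move=> hallP nsPG; apply/setP => x; rewrite inE andbT.
case Gx: (x \in G); first by rewrite (mem_normal_Hall hallP nsPG Gx).
by apply/esym/negbTE; apply: contraFN Gx; apply: (subsetP (pHall_sub hallP)).
Qed.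

Lemma card_pclass_p_elts_hypercentral_Hall pi p n G P :
    pi.-Hall(G) P -> P \subset 'Z_n(G) -> p \in pi ->
  #|pclass_pi_elts p p G| = (#|G|`_p)%N.
Proof.
move=> hallP sPZ pi_p; set B := 'O_p('Z_n(G)).
have nsBG : B <| G := char_normal_trans (pcore_char p _) (ucn_normal n G).
have sBW : B \subset pclass_pi_elts p p G.
  apply/subsetP => b Bb; have Gb := subsetP (normal_sub nsBG) b Bb.
  rewrite inE Gb (mem_p_elt (pcore_pgroup _ _) Bb) -index_cent1 /=.
  apply: pnat_index_p'elt (subcent1_sub b G) _ => g Gg p'g.
  have cBg := hypercentral_pgroup_cent_p'elt nsBG (pcore_pgroup _ _) (pcore_sub _ _) Gg p'g.
  by rewrite inE Gg; apply/cent1P; apply: (centP cBg).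
have cardB : #|B| = (#|G|`_p)%N.
  rewrite (card_Hall (nilpotent_pcore_Hall p (ucn_nilpotent n G))).
  apply/eqP; rewrite eqn_dvd partn_dvd ?cardSg ?ucn_sub //=.
  rewrite -(partn_part _ (nat_pred1_sub pi_p)) -(card_Hall hallP).
  by rewrite partn_dvd ?cardSg.
apply/eqP; rewrite eqn_leq -[X in _ && (X <= _)]cardB subset_leq_card // andbT.
exact: leq_trans (subset_leq_card (pclass_p_elts_sub_pcore p G)) (card_pcore_leq p G).
Qed.

Lemma pcore_Sylow_hypercentral p H :
    #|H|`_p <= #|pclass_pi_elts p p H| ->
  p.-Sylow(H) 'O_p(H) /\ 'O_p(H) \subset 'Z_#|H|(H).
Proof.
move=> le_Hp_W; have sWO := pclass_p_elts_sub_pcore p H.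
have cardO : #|'O_p(H)| = (#|H|`_p)%N.
  by apply/eqP; rewrite eqn_leq card_pcore_leq (leq_trans le_Hp_W) ?subset_leq_card.
have defW : pclass_pi_elts p p H = 'O_p(H).
  by apply/eqP; rewrite eqEcard sWO cardO le_Hp_W.
have sylO : p.-Sylow(H) 'O_p(H) by rewrite pHallE pcore_sub cardO /=.
split=> //; apply: Sylow_sub_ucn_of_pclass sylO _ => a Oa.
by have /setIdP[_ /andP[]] : a \in pclass_pi_elts p p H by rewrite defW.
Qed.

Lemma pcore_Hall_of_card_pi_elts pi H (g : nat) :
    #|class_pi_elts pi predT H| <= (g`_pi)%N ->
    (forall p, prime p -> p \in pi -> (g`_p)%N %| #|'O_p(H)|) ->
  pi.-Hall(H) 'O_pi(H) /\ (#|H|`_pi)%N = (g`_pi)%N.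
Proof.
move=> le_W_g dv_g_Op.
have dv_g_Q : (g`_pi)%N %| #|'O_pi(H)|.
  apply: partn_dvd_of_p_parts => p p_pr pi_p.
  exact: dvdn_trans (dv_g_Op p p_pr pi_p) (cardSg (sub_pcore H (nat_pred1_sub pi_p))).
have sQW : 'O_pi(H) \subset class_pi_elts pi predT H.
  apply/subsetP => x Qx; rewrite inE (subsetP (pcore_sub _ _) x Qx) andbT.
  exact: mem_p_elt (pcore_pgroup _ _) Qx.
have cardQ : #|'O_pi(H)| = (g`_pi)%N.
  apply/eqP; rewrite eqn_leq (dvdn_leq (cardG_gt0 _) dv_g_Q) andbT.
  exact: leq_trans (subset_leq_card sQW) le_W_g.
have defQ : class_pi_elts pi predT H = 'O_pi(H).
  by apply/esym/eqP; rewrite eqEcard sQW cardQ le_W_g.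
have hallQ : pi.-Hall(H) 'O_pi(H).
  rewrite pHallE pcore_sub eqn_dvd -{1}(part_pnat_id (pcore_pgroup pi H)).
  rewrite partn_dvd ?cardSg ?pcore_sub //=; apply: partn_dvd_of_p_parts => p p_pr pi_p.
  have [S sylS] := Sylow_exists p H; rewrite -(card_Hall sylS) cardSg //.
  apply/subsetP => x Sx; suff : x \in class_pi_elts pi predT H by rewrite defQ.
  rewrite inE (subsetP (pHall_sub sylS) x Sx) andbT.
  exact: sub_p_elt (nat_pred1_sub pi_p) (mem_p_elt (pHall_pgroup sylS) Sx).
by rewrite -cardQ (card_Hall hallQ).
Qed.

Lemma hypercentral_pcore_Hall_of_card pi H (g : nat) :
    #|class_pi_elts pi predT H| <= (g`_pi)%N ->
    (forall p, prime p -> p \in pi -> (g`_p)%N <= #|pclass_pi_elts p p H|) ->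
  pi.-Hall(H) 'O_pi(H) /\ 'O_pi(H) \subset 'Z_#|H|(H).
Proof.
move=> le_W_g le_g_Wp.
have le_g_Op p : prime p -> p \in pi -> (g`_p)%N <= #|'O_p(H)|.
  move=> p_pr pi_p; apply: leq_trans (le_g_Wp p p_pr pi_p) _.
  exact: subset_leq_card (pclass_p_elts_sub_pcore p H).
have [hallQ cardH] : pi.-Hall(H) 'O_pi(H) /\ (#|H|`_pi)%N = (g`_pi)%N.
  apply: pcore_Hall_of_card_pi_elts le_W_g _ => p p_pr pi_p.
  exact: dvdn_of_leq_pnat p_pr (part_pnat _ _) (pcore_pgroup _ _) (le_g_Op p p_pr pi_p).
have sylOp p : prime p -> p \in pi -> p.-Sylow(H) 'O_p(H) /\ 'O_p(H) \subset 'Z_#|H|(H).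
  move=> p_pr pi_p; have sp_pi := nat_pred1_sub pi_p; apply: pcore_Sylow_hypercentral.
  by rewrite -(partn_part _ sp_pi) cardH (partn_part _ sp_pi) le_g_Wp.
split=> //; apply/setIidPl/eqP; rewrite eqEcard subsetIl /=.
apply: dvdn_leq; first exact: cardG_gt0.
rewrite -(part_pnat_id (pcore_pgroup pi H)); apply: partn_dvd_of_p_parts => p p_pr pi_p.
have [sylO sOZ] := sylOp p p_pr pi_p.
have sylOQ := pHall_subl (sub_pcore H (nat_pred1_sub pi_p)) (pcore_sub pi H) sylO.
by rewrite -(card_Hall sylOQ) cardSg // subsetI sOZ (sub_pcore H (nat_pred1_sub pi_p)).
Qed.

End PiElementsByClassSize.

Lemma logn_pclass_pi_elts (gT : finGroupType) (X : {group gT}) pi1 pi2 p :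
    prime p -> p \in pi1 -> p \in pi2 ->
  logn p #|pclass_pi_elts pi1 p X| = logn p #|pclass_pi_elts pi2 p X|.
Proof.
move=> p_pr pi1p pi2p; move: {2}#|X| (leqnn #|X|) => n.
elim: n gT X => [|n IHn] gT X leXn; first by rewrite leqNgt cardG_gt0 in leXn.
have [p_Z | p'Z] := boolP (p %| #|'Z(X)|); last first.
  by rewrite !logn_coprime ?prime_coprime ?pclass_pi_elts_ndvd.
have [z Zz oz] := Cauchy p_pr p_Z.
have sKZ : <[z]> \subset 'Z(X) by rewrite cycle_subG.
have pK : p.-group <[z]> by rewrite /pgroup -orderE oz pnat_id.
rewrite !(card_pclass_pi_elts_quotient _ sKZ pK) // -orderE oz.
rewrite !lognM ?pclass_pi_elts_gt0 ?prime_gt0 //; congr (_ + _); apply: IHn.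
rewrite card_quotient ?normal_norm ?sub_center_normal // -ltnS (leq_trans _ leXn) //.
rewrite -(Lagrange (subset_trans sKZ (center_sub X))) -orderE oz.
by rewrite ltn_Pmull ?prime_gt1 ?indexg_gt0.
Qed.

Lemma card_class_pi_elts_eq (gT rT : finGroupType) (G : {group gT}) (H : {group rT})
    pi (Qn : pred nat) :
    (forall n, 0 < n -> num_pi_classes pi G n = num_pi_classes pi H n) ->
  #|class_pi_elts pi Qn G| = #|class_pi_elts pi Qn H|.
Proof.
move=> eqGH; pose b := maxn #|G| #|H|.
rewrite !(@card_class_pi_elts_sum _ _ _ _ b) ?leq_maxl ?leq_maxr //.
apply: eq_bigr => n _; rewrite !card_class_pi_elts_size.
by have [-> | n_gt0] := posnP n; rewrite ?mul0n ?eqGH.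
Qed.

Unset Implicit Arguments.
Set Strict Implicit.

Theorem theoremA (gT rT : finGroupType) (G : {group gT}) (H : {group rT})
    (pi : nat_pred) :
  (exists P : {group gT}, pi.-Hall(G) P /\ hypercentral G P) ->
  (forall n : nat, 0 < n -> num_pi_classes pi G n = num_pi_classes pi H n) ->
  exists Q : {group rT}, pi.-Hall(H) Q /\ hypercentral H Q.
Proof.
move=> [P [hallP [n sPZ]]] eq_classes.
have eq_card Qn := card_class_pi_elts_eq Qn eq_classes.
have [hallQ sQZ] : pi.-Hall(H) 'O_pi(H) /\ 'O_pi(H) \subset 'Z_#|H|(H).
  apply: (hypercentral_pcore_Hall_of_card (g := #|G|)) => [|p p_pr pi_p].
    have nsPG := hypercentral_Hall_normal hallP sPZ.
    by rewrite -eq_card (class_pi_elts_normal_Hall hallP nsPG) (card_Hall hallP).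
  have p_p : p \in (p : nat_pred) by rewrite inE.
  rewrite p_part; have -> : logn p #|G| = logn p #|pclass_pi_elts p p H|.
    rewrite -logn_part -(card_pclass_p_elts_hypercentral_Hall hallP sPZ pi_p).
    rewrite (logn_pclass_pi_elts G p_pr p_p pi_p) eq_card.
    by rewrite (logn_pclass_pi_elts H p_pr pi_p p_p).
  exact: dvdn_leq (pclass_pi_elts_gt0 _ _ _) (pfactor_dvdnn _ _).
by exists 'O_pi(H)%G; split=> //; exists #|H|.
Qed.
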